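(* Let $c>0$, $\epsilon>0$, $\delta\in(0,1)$, let $N\ge1$ be an integer, let $m\ge2$ be an integer and $\hat v\ge0$. Put $L=\ln(3N/\delta)$, $\kappa=\frac13+\frac1{2L}$, $$\epsilon^{\hat v}=\frac{2c^2L}{3m}+\sqrt{\kappa\Big(\frac{c^2L}{m-1}\Big)^2+\frac{2c^2\hat vL}{m}},\qquad \epsilon^{\hat B}=\frac{cL}{3m}+\sqrt{\frac{2(\hat v+\epsilon^{\hat v})L}{m}}.$$ If $\epsilon^{\hat B}\le\epsilon$, then $m>\Big(\frac13+\sqrt{\frac{4+2\sqrt3}{3}}\Big)\cdot\frac{cL}{\epsilon}$.
   Context: In the paper, $N=|\mathcal{I}|$ is the number of (player, pure profile) utility indices, $m$ is the number of samples of a given utility, $\hat v$ is their sample variance, $c$ bounds the range of sampled utilities, and $\epsilon^{\hat B}$ is the empirical Bennett deviation bound for the empirical mean. *)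

From Stdlib Require Import Reals.
Open Scope R_scope.

Definition Lval (N : nat) (delta : R) : R := ln (3 * INR N / delta).

Definition kappa (N : nat) (delta : R) : R := 1/3 + 1 / (2 * Lval N delta).

Definition eps_v (c delta vhat : R) (N m : nat) : R :=
  let L := Lval N delta in
  2 * c^2 * L / (3 * INR m)
  + sqrt (kappa N delta * (c^2 * L / (INR m - 1))^2 + 2 * c^2 * vhat * L / INR m).

Definition eps_B (c delta vhat : R) (N m : nat) : R :=
  let L := Lval N delta in
  c * L / (3 * INR m) + sqrt (2 * (vhat + eps_v c delta vhat N m) * L / INR m).

(* Both bounds only grow with [vhat], and [kappa > 1/3], [m - 1 < m] give
   [eps_v > (2 + sqrt 3)/3 * c^2 L/m].  Since
   [2 (2 + sqrt 3)/3 = (4 + 2 sqrt 3)/3], substituting into [eps_B] yields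
   [eps_B > (1/3 + sqrt ((4 + 2 sqrt 3)/3)) * c L/m], which together with
   [eps_B <= eps] is the claimed lower bound on [m]. *)
From Stdlib Require Import Reals Lra Lia Psatz.
Open Scope R_scope.

Lemma lt_sqrt_of_sqr_lt (x y : R) : 0 <= x -> x * x < y -> x < sqrt y.
Proof.
  intros Hx Hxy. rewrite <- (sqrt_square x Hx).
  apply sqrt_lt_1_alt. split; [nra | exact Hxy].
Qed.

Lemma Lval_pos (N : nat) (delta : R) : 0 < delta < 3 * INR N -> 0 < Lval N delta.
Proof.
  intros [Hd HdN]. unfold Lval. rewrite <- ln_1.
  apply ln_increasing; [lra |].
  apply (Rmult_lt_reg_r delta); [lra |].
  unfold Rdiv. rewrite Rmult_assoc, Rinv_l by lra. lra.
Qed.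

Lemma kappa_gt_third (N : nat) (delta : R) : 0 < Lval N delta -> 1/3 < kappa N delta.
Proof.
  intros HL. unfold kappa.
  assert (0 < 1 / (2 * Lval N delta)) by (apply Rdiv_lt_0_compat; lra).
  lra.
Qed.

Section Deviation_bounds.

Variables (c delta vhat : R) (N m : nat).
Hypotheses (Hc : 0 < c) (HL : 0 < Lval N delta) (Hm : (2 <= m)%nat) (Hv : 0 <= vhat).

Let HM : 2 <= INR m.
Proof. apply (le_INR 2). exact Hm. Qed.

Lemma eps_v_gt : (2 + sqrt 3) / 3 * (c ^ 2 * Lval N delta / INR m) < eps_v c delta vhat N m.
Proof.
  unfold eps_v.
  set (L := Lval N delta) in *; set (M := INR m) in *.
  assert (Hc2 : 0 < c ^ 2) by (apply pow_lt; lra).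
  set (q := c ^ 2 * L / M).
  set (q' := c ^ 2 * L / (M - 1)).
  assert (Hq : 0 < q) by (unfold q; apply Rdiv_lt_0_compat; nra).
  assert (Hqq' : q < q').
  { unfold q, q'. apply Rmult_lt_compat_l; [nra |].
    apply Rinv_lt_contravar; nra. }
  pose proof (kappa_gt_third N delta HL) as Hk.
  assert (Hw : 0 <= 2 * c ^ 2 * vhat * L / M).
  { apply Rmult_le_pos; [| left; apply Rinv_0_lt_compat; lra].
    repeat apply Rmult_le_pos; lra. }
  assert (H3 : sqrt 3 * sqrt 3 = 3) by (apply sqrt_sqrt; lra).
  assert (Hroot : sqrt 3 / 3 * q < sqrt (kappa N delta * q' ^ 2 + 2 * c ^ 2 * vhat * L / M)).
  { apply lt_sqrt_of_sqr_lt; [pose proof (sqrt_pos 3); nra |].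
    replace (sqrt 3 / 3 * q * (sqrt 3 / 3 * q)) with (q * q / 3) by (field_simplify; nra).
    nra. }
  replace (2 * c ^ 2 * L / (3 * M)) with (2 / 3 * q) by (unfold q; field; lra).
  lra.
Qed.

Lemma eps_B_gt :
  (1/3 + sqrt ((4 + 2 * sqrt 3) / 3)) * (c * Lval N delta / INR m) < eps_B c delta vhat N m.
Proof.
  pose proof eps_v_gt as Hev.
  unfold eps_B.
  set (L := Lval N delta) in *; set (M := INR m) in *.
  set (A := c * L / M).
  assert (HA : 0 < A) by (unfold A; apply Rdiv_lt_0_compat; nra).
  set (s := sqrt ((4 + 2 * sqrt 3) / 3)).
  assert (Hs : s * s = (4 + 2 * sqrt 3) / 3)
    by (apply sqrt_sqrt; pose proof (sqrt_pos 3); lra).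
  assert (Hroot : s * A < sqrt (2 * (vhat + eps_v c delta vhat N m) * L / M)).
  { apply lt_sqrt_of_sqr_lt; [apply Rmult_le_pos; [apply sqrt_pos | lra] |].
    assert (HLM : 0 < L / M) by (apply Rdiv_lt_0_compat; lra).
    replace (s * A * (s * A)) with (s * s * (A * A)) by ring.
    rewrite Hs.
    replace ((4 + 2 * sqrt 3) / 3 * (A * A))
      with (2 * ((2 + sqrt 3) / 3 * (c ^ 2 * L / M)) * (L / M)) by (unfold A; field; lra).
    replace (2 * (vhat + eps_v c delta vhat N m) * L / M)
      with (2 * (vhat + eps_v c delta vhat N m) * (L / M)) by (field; lra).
    apply Rmult_lt_compat_r; lra. }
  replace (c * L / (3 * M)) with (A / 3) by (unfold A; field; lra).
  lra.
Qed.

End Deviation_bounds.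

Theorem lemma7 (c eps delta vhat : R) (N m : nat) :
  0 < c -> 0 < eps -> 0 < delta < 1 -> (1 <= N)%nat -> (2 <= m)%nat -> 0 <= vhat ->
  eps_B c delta vhat N m <= eps ->
  INR m > (1/3 + sqrt ((4 + 2 * sqrt 3) / 3)) * (c * Lval N delta / eps).
Proof.
  intros Hc He Hd HN Hm Hv HB.
  assert (HL : 0 < Lval N delta).
  { apply Lval_pos. assert (1 <= INR N) by (apply (le_INR 1); exact HN). lra. }
  assert (HM : 0 < INR m) by (apply lt_0_INR; lia).
  pose proof (eps_B_gt c delta vhat N m Hc HL Hm Hv) as Hlow.
  set (K := 1/3 + sqrt ((4 + 2 * sqrt 3) / 3)) in *.
  set (cL := c * Lval N delta) in *.
  assert (HKcL : K * cL < eps * INR m).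
  { replace (K * cL) with (K * (cL / INR m) * INR m) by (field; lra).
    apply Rmult_lt_compat_r; lra. }
  apply Rmult_lt_reg_l with eps; [exact He |].
  replace (eps * (K * (cL / eps))) with (K * cL) by (field; lra).
  lra.
Qed.
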